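(* For all $n \ge 5$, \[ w(n,1) = w(n-2,1) + w(n-3,0) - 1, \] where $w(m,k)$ is the number of compositions of $m$ with all parts in $\{1,2\}$ having exactly $k$ water cells.
   Context: A composition of $n \ge 0$ is a finite sequence $(c_1,\dots,c_t)$ of positive integers with $c_1+\cdots+c_t=n$; the empty composition is the unique composition of $0$. Let $C_{12}(n)$ be the set of compositions of $n$ all of whose parts lie in $\{1,2\}$. The number of water cells of a composition $(c_1,\dots,c_t)$ is $\sum_{i=1}^{t} \max\bigl(0, \min(\max_{j \le i} c_j, \max_{j \ge i} c_j) - c_i\bigr)$ (the number of unit squares that would hold water poured over its bargraph, in which column $i$ has height $c_i$). For $n,k \ge 0$, $W(n,k)$ is the set of compositions in $C_{12}(n)$ with exactly $k$ water cells and $w(n,k)=|W(n,k)|$. *)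

From mathcomp Require Import all_boot.
Set Implicit Arguments. Unset Strict Implicit. Unset Printing Implicit Defensive.

Fixpoint seqs12 (m : nat) : seq (seq nat) :=
  match m with
  | 0 => [:: [::]]
  | m'.+1 => [seq x :: s | x <- [:: 1; 2], s <- seqs12 m']
  end.

(* C_{12}(n): compositions of n with all parts in {1,2}; each such
   composition has at most n parts. *)
Definition C12 (n : nat) : seq (seq nat) :=
  [seq s <- flatten [seq seqs12 m | m <- iota 0 n.+1] | sumn s == n].

(* max_{j <= i} c_j and max_{j >= i} c_j (0-based index i) *)
Definition lmax (c : seq nat) (i : nat) : nat := foldr maxn 0 (take i.+1 c).
Definition rmax (c : seq nat) (i : nat) : nat := foldr maxn 0 (drop i c).

(* number of water cells:
   sum_i max(0, min(lmax i, rmax i) - c_i)  (truncated nat subtraction) *)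
Definition water (c : seq nat) : nat :=
  sumn [seq minn (lmax c i) (rmax c i) - nth 0 c i | i <- iota 0 (size c)].

Definition w (n k : nat) : nat := count (fun c => water c == k) (C12 n).

From mathcomp Require Import all_boot zify.

(* In a composition with parts in {1,2} a water cell sits exactly on each part
   1 lying between two parts 2.  Let g_k(n) count the compositions of n that
   hold k cells when a wall of height 2 stands to their left.  Splitting off
   the first part gives w(n+2,k) = w(n+1,k) + g_k(n), and the same split of
   g_1 yields, by induction, g_1(n+1) + g_1(n) + 1 = w(n,0).  Applying the
   first recurrence twice to w(n+3,1) gives w(n+3,1) + 1 = w(n+1,1) + w(n,0),
   so the identity in fact holds for all n >= 3. *)

Lemma flatten_map_uniq (S T : eqType) (f : S -> seq T) (g : T -> S) (r : seq S) :
  uniq r -> (forall x, uniq (f x)) -> (forall x y, y \in f x -> g y = x) ->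
  uniq (flatten (map f r)).
Proof.
move=> + uniq_f f_g; elim: r => //= x r IH /andP [xr /IH uniq_r].
rewrite cat_uniq uniq_f uniq_r andbT; apply/hasPn => y /flatten_mapP [x' x'r yx'].
apply/negP => /f_g gy; by move: xr; rewrite -gy (f_g _ _ yx') x'r.
Qed.

Lemma mem_cons_map (T : eqType) (a x : T) (t : seq T) (L : seq (seq T)) :
  (x :: t \in map (cons a) L) = (x == a) && (t \in L).
Proof. by apply/mapP/andP => [[u Lu [-> ->]] | [/eqP -> Lt]]; last exists t. Qed.

Lemma nil_notin_map_cons (T : eqType) (a : T) (L : seq (seq T)) :
  ([::] \in map (cons a) L) = false.
Proof. by apply/mapP => -[]. Qed.

Lemma uniq_cat_map_cons (T : eqType) (a b : T) (L1 L2 : seq (seq T)) :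
  a != b -> uniq L1 -> uniq L2 -> uniq (map (cons a) L1 ++ map (cons b) L2).
Proof.
move=> ab uniq_L1 uniq_L2; rewrite cat_uniq !map_inj_uniq ?uniq_L1 ?uniq_L2 //=;
  try by move=> ? ? [].
rewrite andbT; apply/hasPn => _ /mapP [t _ ->]; by rewrite mem_cons_map eq_sym (negbTE ab).
Qed.

Definition all12 : seq nat -> bool := all (fun x => (x == 1) || (x == 2)).

Lemma size_le_sumn12 s : all12 s -> size s <= sumn s.
Proof. by elim: s => //= x t IH /andP [x12 /IH]; move: x12; lia. Qed.

Fixpoint comp12 (n : nat) : seq (seq nat) :=
  if n is n'.+1 then
    map (cons 1) (comp12 n') ++
    (if n' is n''.+1 then map (cons 2) (comp12 n'') else [::])
  else [:: [::]].

Lemma comp12_SS n : comp12 n.+2 = map (cons 1) (comp12 n.+1) ++ map (cons 2) (comp12 n).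
Proof. by []. Qed.

Lemma mem_comp12 (s : seq nat) n : (s \in comp12 n) = all12 s && (sumn s == n).
Proof.
elim: s n => [|x t IH] [|n] //=.
- by rewrite mem_cat nil_notin_map_cons; case: n => // n; rewrite nil_notin_map_cons.
- by rewrite mem_seq1 addn_eq0 andbC; case: x => [|[|[|x]]]; rewrite ?andbF.
rewrite mem_cat mem_cons_map IH; case: n => [|n]; rewrite ?in_nil ?mem_cons_map ?IH.
all: by case: x => [|[|[|x]]] //=; case: (all12 t); rewrite ?andbF //; lia.
Qed.

Lemma uniq_comp12 n : uniq (comp12 n).
Proof.
by elim/ltn_ind: n => -[|[|n]] IH //; rewrite comp12_SS uniq_cat_map_cons ?IH.
Qed.

Lemma mem_seqs12 (s : seq nat) m : (s \in seqs12 m) = all12 s && (size s == m).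
Proof.
elim: s m => [|x t IH] [|m] //=; rewrite ?andbF // cats0 mem_cat.
- by rewrite !nil_notin_map_cons.
by rewrite !mem_cons_map !IH eqSS -andbA andb_orl.
Qed.

Lemma uniq_seqs12 m : uniq (seqs12 m).
Proof. by elim: m => //= m IH; rewrite cats0 uniq_cat_map_cons. Qed.

Lemma uniq_C12 n : uniq (C12 n).
Proof.
apply/filter_uniq/(@flatten_map_uniq _ _ _ size) => [||m s]; rewrite ?iota_uniq //.
  exact: uniq_seqs12.
by rewrite mem_seqs12 => /andP [_ /eqP].
Qed.

Lemma mem_C12 (s : seq nat) n : (s \in C12 n) = all12 s && (sumn s == n).
Proof.
rewrite mem_filter andbC; have [s12|] := boolP (all12 s); last first.
  by apply/contraNF => /andP [/flatten_mapP [m _]]; rewrite mem_seqs12 => /andP [].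
have [sum_s|] := eqVneq (sumn s) n; rewrite ?andbF // andbT.
apply/flatten_mapP; exists (size s); last by rewrite mem_seqs12 s12 eqxx.
by rewrite mem_iota add0n ltnS -sum_s size_le_sumn12.
Qed.

Lemma perm_C12 n : perm_eq (C12 n) (comp12 n).
Proof.
by apply: uniq_perm; rewrite ?uniq_C12 ?uniq_comp12 // => s; rewrite mem_C12 mem_comp12.
Qed.

Lemma count_comp12_SS (P : pred (seq nat)) n :
  count P (comp12 n.+2) =
  count (fun s => P (1 :: s)) (comp12 n.+1) + count (fun s => P (2 :: s)) (comp12 n).
Proof. by rewrite comp12_SS count_cat !count_map. Qed.

Lemma count_comp12_no2 n : count (fun s => 2 \notin s) (comp12 n) = 1.
Proof.
elim/ltn_ind: n => -[|[|n]] IH //.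
rewrite count_comp12_SS -[RHS](IH n.+1) // -[RHS]addn0; congr (_ + _).
by rewrite (eq_count (a2 := pred0)) ?count_pred0 // => s /=; rewrite in_cons.
Qed.

(* The water held by [s] when a wall of height [h] stands to its left. *)
Fixpoint water_from (h : nat) (s : seq nat) : nat :=
  if s is y :: t then
    minn (maxn h y) (maxn y (foldr maxn 0 t)) - y + water_from (maxn h y) t
  else 0.

Lemma water_fromE h s :
  sumn [seq minn (maxn h (lmax s i)) (rmax s i) - nth 0 s i | i <- iota 0 (size s)]
  = water_from h s.
Proof.
elim: s h => [|y t IH] h //=.
rewrite -(IH (maxn h y)) /lmax /rmax /= take0 /= maxn0; congr (_ + _).
rewrite (iotaDl 1 0) -map_comp; congr sumn; apply: eq_map => i /=.
by rewrite /lmax /rmax /= maxnA.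
Qed.

Lemma water_water_from s : water s = water_from 0 s.
Proof. by rewrite -water_fromE /water; congr sumn; apply: eq_map => i; rewrite max0n. Qed.

Section Water12.

Variable s : seq nat.
Hypothesis s12 : all12 s.

Lemma peak12 : minn 2 (maxn 1 (foldr maxn 0 s)) = (2 \in s).+1.
Proof.
elim: s s12 => //= y t IH /andP [y12 /IH]; rewrite in_cons.
by case/orP: y12 => /eqP ->; case: (2 \in t) => /=; lia.
Qed.

Lemma water_from1 : water_from 1 s = water_from 0 s.
Proof.
case: s s12 => [|y t] //= /andP [y12 _].
by have -> : maxn 1 y = maxn 0 y by move: y12; lia.
Qed.

Lemma water_cons1 : water (1 :: s) = water s.
Proof. by rewrite !water_water_from /= water_from1; have := peak12; case: (2 \in s); lia. Qed.

Lemma water_from2_cons1 : water_from 2 (1 :: s) = (2 \in s) + water_from 2 s.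
Proof. by rewrite /= -[maxn 2 1]/2; have := peak12; case: (2 \in s); lia. Qed.

End Water12.

Lemma water_cons2 s : water (2 :: s) = water_from 2 s.
Proof. by rewrite water_water_from /= max0n; lia. Qed.

Lemma water_from2_cons2 s : water_from 2 (2 :: s) = water_from 2 s.
Proof. by rewrite /= maxnn; lia. Qed.

Lemma water_from2_no2 s : all12 s -> 2 \notin s -> water_from 2 s = 0.
Proof.
elim: s => //= y t IH /andP [y12 t12]; rewrite in_cons negb_or => /andP [y2 t2].
have -> : y = 1 by move: y12 y2; lia.
by rewrite -/(water_from 2 (1 :: t)) water_from2_cons1 // IH // (negbTE t2).
Qed.

Definition count_wall k n := count (fun s => water_from 2 s == k) (comp12 n).

Definition count_wall_dry2 n :=
  count (fun s => (2 \in s) && (water_from 2 s == 0)) (comp12 n).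

Lemma all12_comp12 s n : s \in comp12 n -> all12 s.
Proof. by rewrite mem_comp12 => /andP []. Qed.

Lemma count_wall0_SS n : count_wall 0 n.+2 = (count_wall 0 n).+1.
Proof.
rewrite /count_wall count_comp12_SS -[RHS]addn1 addnC; congr (_ + _).
- by apply: eq_count => s; rewrite water_from2_cons2.
rewrite -[RHS](count_comp12_no2 n.+1); apply: eq_in_count => s /all12_comp12 s12.
rewrite water_from2_cons1 //.
by have [|s2] := boolP (2 \in s); last rewrite water_from2_no2.
Qed.

Lemma count_wall_dry2_SS n : count_wall_dry2 n.+2 = count_wall 0 n.
Proof.
rewrite /count_wall_dry2 count_comp12_SS (eq_in_count (a2 := pred0)) ?count_pred0.
  by apply: eq_count => s; rewrite water_from2_cons2 mem_head.
by move=> s /all12_comp12 s12; rewrite water_from2_cons1 // in_cons; case: (2 \in s).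
Qed.

Lemma count_wall1_SS n : count_wall 1 n.+2 = count_wall_dry2 n.+1 + count_wall 1 n.
Proof.
rewrite /count_wall count_comp12_SS; congr (_ + _).
- apply: eq_in_count => s /all12_comp12 s12; rewrite water_from2_cons1 //.
  by have [|s2] := boolP (2 \in s); last rewrite water_from2_no2.
by apply: eq_count => s; rewrite water_from2_cons2.
Qed.

Lemma wE n k : w n k = count (fun s => water s == k) (comp12 n).
Proof. exact/permP/perm_C12. Qed.

Lemma w_SS n k : w n.+2 k = w n.+1 k + count_wall k n.
Proof.
rewrite !wE count_comp12_SS; congr (_ + _).
- by apply: eq_in_count => s /all12_comp12 s12; rewrite water_cons1.
by apply: eq_count => s; rewrite water_cons2.
Qed.

Lemma w0_S n : w n.+1 0 = count_wall_dry2 n.+1 + w n 0.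
Proof. by case: n => [|n]; [rewrite !wE | rewrite w_SS count_wall_dry2_SS addnC]. Qed.

Lemma count_wall1_pair n : count_wall 1 n.+1 + count_wall 1 n + 1 = w n 0.
Proof.
elim: n => [|n IH]; first by rewrite wE.
by rewrite count_wall1_SS w0_S -IH; lia.
Qed.

Lemma w1_SSS n : w n.+3 1 + 1 = w n.+1 1 + w n 0.
Proof. by rewrite !w_SS -count_wall1_pair; lia. Qed.

Theorem theorem2p3 (n : nat) : 5 <= n ->
  w n 1 + 1 = w (n - 2) 1 + w (n - 3) 0.
Proof.
move=> n_ge5; have [m ->] : exists m, n = m.+3 by exists (n - 3); lia.
by rewrite w1_SSS; congr (w _ _ + w _ _); lia.
Qed.
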